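(* Let $\Gamma$ be an elliptic graph with NN-elliptic sequence $\{B_j\}_{j=-1}^m$ and associated cycles $C_j=\sum_{i=-1}^j Z_{B_i}$ ($-1\le j\le m$). Let $\ell\in Supp(P_0)$ be an exponent of the canonical polynomial of $\Gamma$ and let $l'$ be its associated cycle. Then (1) $l'\in\{C_{-1},C_0,\dots,C_{m-1}\}$; (2) for every $j$ and every $\ell\in Supp_j(P_0)$ one has $\mathcal V^{<0}(\ell)=\mathcal V(\Gamma)\setminus \mathcal V(B_{j+1})$.
   Context: Let $\Gamma$ be a finite connected tree with vertex set $\mathcal V$, each vertex $v$ decorated by an integer $e_v$ (all genus decorations zero). Let $L$ be the free abelian group with basis $\{E_v\}_{v\in\mathcal V}$ and symmetric bilinear form $(E_v,E_v)=e_v$, $(E_v,E_w)=1$ if $v\neq w$ are adjacent and $0$ otherwise; it is assumed negative definite. Let $L'=\{l'\in L\otimes\mathbb Q:(l',l)\in\mathbb Z\ \forall l\in L\}$, $H=L'/L$, and $[l']$ the class of $l'$. Let $E_v^*\in L'$ be defined by $(E_v^*,E_w)=-\delta_{vw}$. For $l'=\sum_v l'_vE_v$ write $l'_1\ge l'_2$ if $l'_{1,v}\ge l'_{2,v}$ for all $v$, $l'_1\prec l'_2$ if $l'_{1,v}<l'_{2,v}$ for all $v$, $l>0$ if $l\ge0,l\ne0$; $|l'|=\{v:l'_v\ne0\}$; $E=\sum_vE_v$; $\delta_v$ is the valency of $v$. The anticanonical cycle $Z_K\in L'$ is defined by $(Z_K,E_v)=e_v+2$ for all $v$, and $\chi(l')=-(l',l'-Z_K)/2$.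 Let $\mathcal S'=\{l'\in L':(l',E_v)\le0\ \forall v\}$, $\mathcal S'_h=\{l'\in\mathcal S':[l']=h\}$, and $s_h=\min\mathcal S'_h$ (coordinatewise minimum; it lies in $\mathcal S'_h$). For a connected full subgraph $B$ the same notions are defined using only the vertices of $B$; $Z_{min}(B)$ denotes the minimal nonzero element of $\mathcal S'(B)\cap L(B)$. Topological Poincaré series: $Z(\mathbf t)=\sum_{l'\in L'}z(l')\mathbf t^{l'}$ is the Taylor expansion at the origin of $\prod_{v}(1-\mathbf t^{E_v^*})^{\delta_v-2}$, where $\mathbf t^{l'}=\prod_v t_v^{l'_v}$. Canonical polynomial: $P_0(\mathbf t)=\sum_{\ell\in L,\ \ell\not\prec 0}w(\ell)\mathbf t^{\ell}$ with $w(\ell)=z(Z_K-E-\ell)$, and $Supp(P_0)=\{\ell\in L:\ell\not\prec0,\ w(\ell)\ne0\}$. An elliptic graph is such a $\Gamma$ with $e_v\le-2$ for all $v$ and $\min_{l\in L,l>0}\chi(l)=0$. The minimally elliptic cycle $C$ is the unique $C\in L$, $C>0$, with $\chi(C)=0$ and $\chi(l)>0$ for $0<l<C$. NN-elliptic sequence: $B_{-1}=\Gamma$, $Z_{B_{-1}}=s_{[Z_K]}$, $B_0=|Z_K-s_{[Z_K]}|$; for $j\ge0$, $Z_{B_j}=Z_{min}(B_j)$ (viewed in $L$), and if $Z_K-\sum_{i=-1}^jZ_{B_i}\neq0$ one sets $B_{j+1}=|Z_K-\sum_{i=-1}^jZ_{B_i}|$; $m$ is the index with $Z_K=\sum_{i=-1}^mZ_{B_i}$.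 (It is known that this is well defined, each $B_j$, $j\ge0$, is a connected elliptic full subgraph, and $B_m=|C|$.) Set $C_j=\sum_{i=-1}^jZ_{B_i}$. For $\ell\in Supp(P_0)$ let $\mathcal V^{<0}(\ell)=\{v:\ell_v<0\}$; its associated cycle is the unique $l'\in L'$ with $\ell=Z_K-E-l'-\sum_{v\in\mathcal V^{<0}(\ell)}m_vE_v$, where $l'\le Z_K$, $l'_v=(Z_K)_v$ for $v\in\mathcal V^{<0}(\ell)$, and $m_v\in\mathbb Z_{\ge0}$. $Supp_j(P_0)$ denotes the set of $\ell\in Supp(P_0)$ whose associated cycle is $C_j$. *)

From HB Require Import structures.
From mathcomp Require Import all_boot all_order all_algebra.
Set Implicit Arguments. Unset Strict Implicit. Unset Printing Implicit Defensive.
Import Order.TTheory GRing.Theory Num.Theory.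
Local Open Scope ring_scope.

(* Elements of L (x) Q are row vectors 'rV[rat]_n (coordinates in the basis E_v). *)
Section Plumbing.
Variables (n : nat) (adj : rel 'I_n) (e : 'I_n -> int).

Definition vec := 'rV[rat]_n.

(* Finite simple graph which is a tree: symmetric, irreflexive, connected,
   with exactly n-1 (unordered) edges. *)
Definition is_tree : Prop :=
  [/\ symmetric adj, irreflexive adj, (forall u v, connect adj u v) &
      #|[set p : 'I_n * 'I_n | adj p.1 p.2]| = (n.-1).*2 ]%N.

Definition valency (v : 'I_n) : nat := #|[set w | adj v w]|.

Definition Imx : 'M[rat]_n :=
  \matrix_(v, w) (if v == w then (e v)%:~R else if adj v w then 1 else 0).

Definition bil (x y : vec) : rat := (x *m Imx *m y^T) 0 0.

Definition Ebas (v : 'I_n) : vec := delta_mx 0 v.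

Definition Eall : vec := \row_v 1.

Definition neg_def : Prop := forall x : vec, x != 0 -> bil x x < 0.

Definition inL (x : vec) : Prop := forall v, x 0 v \is a Num.int.

Definition inL' (x : vec) : Prop := forall l : vec, inL l -> bil x l \is a Num.int.

(* E_v^* : (E_v^*, E_w) = - delta_vw *)
Definition Estar (v : 'I_n) : vec := - row v (invmx Imx).

(* anticanonical cycle: (Z_K, E_v) = e_v + 2 *)
Definition ZK : vec := (\row_v ((e v)%:~R + 2)) *m invmx Imx.

Definition chi (x : vec) : rat := - bil x (x - ZK) / 2.

Definition vle (x y : vec) : Prop := forall v, x 0 v <= y 0 v.
Definition vprec (x y : vec) : Prop := forall v, x 0 v < y 0 v.
Definition vpos (x : vec) : Prop := vle 0 x /\ x <> 0.

Definition supp (x : vec) : {set 'I_n} := [set v | x 0 v != 0].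

Definition inSp (x : vec) : Prop := inL' x /\ forall v, bil x (Ebas v) <= 0.

Definition is_s_ZK (x : vec) : Prop :=
  [/\ inSp x, inL (x - ZK) &
      forall y, inSp y -> inL (y - ZK) -> vle x y].

Definition in_SpL_B (B : {set 'I_n}) (y : vec) : Prop :=
  [/\ inL y, (forall v, v \notin B -> y 0 v = 0) &
      forall v, v \in B -> bil y (Ebas v) <= 0].
Definition is_Zmin (B : {set 'I_n}) (z : vec) : Prop :=
  [/\ in_SpL_B B z, z <> 0 &
      forall y, in_SpL_B B y -> y <> 0 -> vle y z -> y = z].

Definition elliptic : Prop :=
  [/\ (forall v, e v <= -2),
      (exists l, [/\ inL l, vpos l & chi l = 0]) &
      (forall l, inL l -> vpos l -> 0 <= chi l)].

(* coefficient of x^k in the Taylor expansion of (1 - x)^d at 0 *)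
Definition taylor_coef (d : int) (k : nat) : rat :=
  match d with
  | Posz a => (-1) ^+ k * ('C(a, k))%:R
  | Negz a => ('C(k + a, k))%:R   (* d = -(a+1) *)
  end.

(* Coefficient z(l') of t^{l'} in the expansion of
   prod_v (1 - t^{E_v^*})^{delta_v - 2}:
   sum over k in N^V with sum_v k_v E_v^* = l' of prod_v coef_v(k_v).
   Any such k satisfies k_w = -(l', E_w), so k_w < bound l'; the
   truncation to k_w < bound l' is therefore exact. *)
Definition zbound (x : vec) : nat :=
  (\sum_w `|Num.floor (bil x (Ebas w))|)%N.+1.
Definition zcoef (x : vec) : rat :=
  \sum_(k : {ffun 'I_n -> 'I_(zbound x)} |
          \sum_v ((k v : nat)%:R *: Estar v) == x)
     \prod_v taylor_coef ((valency v)%:Z - 2) (k v).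

Definition inSuppP0 (ell : vec) : Prop :=
  [/\ inL ell, ~ vprec ell 0 & zcoef (ZK - Eall - ell) != 0].

Definition negset (ell : vec) : {set 'I_n} := [set v | ell 0 v < 0].

Definition assoc_cycle (ell l' : vec) : Prop :=
  [/\ inL' l', vle l' ZK, (forall v, v \in negset ell -> l' 0 v = ZK 0 v) &
      exists mv : 'I_n -> nat,
        ell = ZK - Eall - l' - \sum_(v in negset ell) (mv v)%:R *: Ebas v].

(* NN-elliptic sequence, with shifted indices:
   Bs k = B_{k-1}, Zs k = Z_{B_{k-1}}, Cs k = C_{k-1} (k = 0, ..., m+1). *)
Definition Cs (Zs : nat -> vec) (k : nat) : vec := \sum_(i < k.+1) Zs i.

Definition NN_seq (m : nat) (Bs : nat -> {set 'I_n}) (Zs : nat -> vec) : Prop :=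
  [/\ Bs 0%N = setT, is_s_ZK (Zs 0%N),
      (forall k, (1 <= k <= m.+1)%N -> is_Zmin (Bs k) (Zs k)),
      (forall k, (k <= m)%N -> Cs Zs k <> ZK /\ Bs k.+1 = supp (ZK - Cs Zs k)) &
      Cs Zs m.+1 = ZK].

End Plumbing.

From Pilot Require Import Defs.
From mathcomp Require Import all_boot all_order all_algebra lra.
Import Order.TTheory GRing.Theory Num.Theory.
Set Implicit Arguments. Unset Strict Implicit. Unset Printing Implicit Defensive.
Local Open Scope ring_scope.

(* The associated cycle l' of an exponent ell of P_0 lies in S'_[Z_K] strictly
   below Z_K.  Indeed x = Z_K - E - ell is an exponent of Z(t), so (x, E_v) <= 0
   for all v; off V^{<0}(ell) the cycle l' agrees with x and elsewhere it agrees
   with Z_K, while l' <= x and l' <= Z_K.  Moreover l' differs from Z_K exactly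
   off V^{<0}(ell), a nonempty set since ell is not < 0 everywhere.

   Every such u is one of the C_j.  Inductively C_j <= u; if C_j <> u, then
   A = Z_K - C_j has chi(A) = (C_j, A)/2 <= 0, so ellipticity forces
   (C_j, E_v) = 0 on B_{j+1} = |A| and makes |A| connected.  Then u - C_j is a
   nonzero element of S'(B_{j+1}) /\ L(B_{j+1}); these elements are positive on
   all of B_{j+1} and closed under coordinatewise min, so Z_{B_{j+1}} <= u - C_j,
   i.e. C_{j+1} <= u.  Since the sequence ends at Z_K, it meets u.  Part (2)
   follows from B_{j+1} = |Z_K - C_j| = |Z_K - l'|. *)

Section EllipticCycles.
Variables (n : nat) (adj : rel 'I_n) (e : 'I_n -> int).
Hypotheses (adj_sym : symmetric adj) (negd : neg_def adj e).
Hypotheses (e_le : forall v, e v <= -2) (conn : forall u v, connect adj u v).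
Hypothesis chi_ge0 : forall l, inL l -> vpos l -> 0 <= chi adj e l.
Implicit Types (x y l : vec n) (v w a b : 'I_n).
Local Notation Imx := (Imx adj e).
Local Notation bil := (bil adj e).
Local Notation ZK := (ZK adj e).
Local Notation chi := (chi adj e).
Local Notation inL' := (inL' adj e).
Local Notation inSp := (inSp adj e).
Local Notation Estar := (Estar adj e).
Local Notation SpL := (in_SpL_B adj e).

(** * The intersection form *)

Lemma trmx_Imx : Imx^T = Imx.
Proof. by apply/matrixP => v w; rewrite !mxE eq_sym adj_sym; case: eqP => // ->. Qed.

Lemma Imx_ge0 v w : v != w -> 0 <= Imx v w.
Proof. by rewrite mxE => /negbTE ->; case: adj. Qed.

Lemma vle0P l : vle 0 l <-> forall v, 0 <= l 0 v.
Proof. by split=> l0 v; have := l0 v; rewrite mxE. Qed.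

Lemma coordD x y v : (x + y) 0 v = x 0 v + y 0 v.
Proof. by rewrite mxE. Qed.

Lemma coordB x y v : (x - y) 0 v = x 0 v - y 0 v.
Proof. by rewrite !mxE. Qed.

Lemma Ebas_coord v w : Ebas v 0 w = (v == w)%:R.
Proof. by rewrite mxE eqxx eq_sym. Qed.

Lemma bil_Ebasr x w : bil x (Ebas w) = \sum_v x 0 v * Imx v w.
Proof.
rewrite /Defs.bil /Ebas trmx_delta mxE (bigD1 w) //= big1 => [|v vw].
  by rewrite !mxE !eqxx mulr1 addr0.
by rewrite [delta_mx _ _ _ _]mxE (negbTE vw) mulr0.
Qed.

Lemma bil_Ebasr_mx x w : bil x (Ebas w) = (x *m Imx) 0 w.
Proof. by rewrite bil_Ebasr mxE. Qed.

Lemma bil_expandr x y : bil x y = \sum_w y 0 w * bil x (Ebas w).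
Proof.
under eq_bigr => w _ do rewrite bil_Ebasr.
rewrite /Defs.bil mxE; apply: eq_bigr => w _.
by rewrite mulrC [y^T _ _]mxE [(x *m _) _ _]mxE.
Qed.

Lemma bilC x y : bil x y = bil y x.
Proof.
rewrite /Defs.bil -[in LHS](trmxK (x *m Imx *m y^T)) mxE.
by rewrite !trmx_mul trmxK trmx_Imx mulmxA.
Qed.

Lemma bilDl x1 x2 y : bil (x1 + x2) y = bil x1 y + bil x2 y.
Proof. by rewrite /Defs.bil !mulmxDl mxE. Qed.

Lemma bilZl (k : rat) x y : bil (k *: x) y = k * bil x y.
Proof. by rewrite /Defs.bil -!scalemxAl mxE. Qed.

Lemma bilNl x y : bil (- x) y = - bil x y.
Proof. by rewrite -scaleN1r bilZl mulN1r. Qed.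

Lemma bilBl x1 x2 y : bil (x1 - x2) y = bil x1 y - bil x2 y.
Proof. by rewrite bilDl bilNl. Qed.

Lemma bil_suml (I : finType) (F : I -> vec n) y :
  bil (\sum_i F i) y = \sum_i bil (F i) y.
Proof. by rewrite /Defs.bil !mulmx_suml summxE. Qed.

Lemma bilDr x y1 y2 : bil x (y1 + y2) = bil x y1 + bil x y2.
Proof. by rewrite !(bilC x) bilDl. Qed.

Lemma bilBr x y1 y2 : bil x (y1 - y2) = bil x y1 - bil x y2.
Proof. by rewrite !(bilC x) bilBl. Qed.

Lemma bil_Ebas v w : bil (Ebas v) (Ebas w) = Imx v w.
Proof.
rewrite bil_Ebasr (bigD1 v) //= big1 => [|u uv].
  by rewrite Ebas_coord eqxx mul1r addr0.
by rewrite Ebas_coord eq_sym (negbTE uv) mul0r.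
Qed.

Lemma ler_bil_Ebasr x y v : vle x y -> x 0 v = y 0 v ->
  bil x (Ebas v) <= bil y (Ebas v).
Proof.
move=> le_xy eq_v; rewrite -subr_ge0 -bilBl bil_Ebasr; apply: sumr_ge0 => w _.
have [->|wv] := eqVneq w v; first by rewrite !mxE eq_v subrr mul0r.
by rewrite mulr_ge0 ?Imx_ge0 // !mxE subr_ge0.
Qed.

Lemma bil_ge0_disjoint x y : vle 0 x -> vle 0 y ->
  (forall v, x 0 v * y 0 v = 0) -> 0 <= bil x y.
Proof.
move=> /vle0P x0 /vle0P y0 xy0; rewrite bil_expandr; apply: sumr_ge0 => w _.
rewrite bil_Ebasr mulr_sumr; apply: sumr_ge0 => v _.
have [->|vw] := eqVneq v w; first by rewrite mulrA [y 0 w * _]mulrC xy0 mul0r.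
by do 2!apply: mulr_ge0 => //; apply: Imx_ge0.
Qed.

Lemma bil_Ebasr_ge_sum l b (T : {set 'I_n}) : vle 0 l -> l 0 b = 0 ->
  (forall a, a \in T -> adj a b) -> \sum_(a in T) l 0 a <= bil l (Ebas b).
Proof.
move=> /vle0P l0 lb Tb; rewrite bil_Ebasr [leRHS](bigID (mem T)) /= -[leLHS]addr0.
apply: lerD; last first.
  apply: sumr_ge0 => a _; have [->|ab] := eqVneq a b; first by rewrite lb mul0r.
  by apply: mulr_ge0 => //; apply: Imx_ge0.
apply: ler_sum => a aT; have [->|ab] := eqVneq a b; first by rewrite lb mul0r.
by rewrite mxE (negbTE ab) Tb // mulr1.
Qed.

Lemma bil_Ebasr_ge_neighbour l a b : vle 0 l -> l 0 b = 0 -> adj a b ->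
  l 0 a <= bil l (Ebas b).
Proof.
move=> l0 lb ab; have := bil_Ebasr_ge_sum (T := [set a]) l0 lb.
by rewrite big_set1; apply=> ? /set1P ->.
Qed.

Lemma inLD x y : inL x -> inL y -> inL (x + y).
Proof. by move=> xL yL v; rewrite mxE rpredD. Qed.

Lemma inLN x : inL x -> inL (- x).
Proof. by move=> xL v; rewrite mxE rpredN. Qed.

Lemma inLB x y : inL x -> inL y -> inL (x - y).
Proof. by move=> xL yL; apply: inLD => //; apply: inLN. Qed.

Lemma inL_Ebas v : inL (Ebas v).
Proof. by move=> w; rewrite Ebas_coord rpred_nat. Qed.

Lemma supp_coord_ge1 l v : inL l -> vle 0 l -> v \in supp l -> 1 <= l 0 v.
Proof.
move=> lL /vle0P l0; rewrite inE => lv.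
by rewrite -(ger0_norm (l0 v)) norm_intr_ge1.
Qed.

Lemma inL'P x : inL' x <-> forall w, bil x (Ebas w) \is a Num.int.
Proof.
split=> [xL' w|xE l lL]; first exact/xL'/inL_Ebas.
by rewrite bil_expandr rpred_sum // => w _; rewrite rpredM.
Qed.

Lemma inL'D x y : inL' x -> inL' y -> inL' (x + y).
Proof. by move=> /inL'P xL' /inL'P yL'; apply/inL'P => w; rewrite bilDl rpredD. Qed.

Lemma inL_L' x : inL x -> inL' x.
Proof.
move=> xL; apply/inL'P => w; rewrite bil_Ebasr rpred_sum // => v _.
by rewrite rpredM // mxE; case: eqP; rewrite ?intr_int //; case: adj.
Qed.

Lemma unitmx_Imx : Imx \in unitmx.
Proof.
rewrite unitmxE unitfE; apply/negP => /det0P [x x0 xI].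
by have := negd x0; rewrite /Defs.bil xI mul0mx mxE ltxx.
Qed.

Lemma bil_ZK_Ebasr w : bil ZK (Ebas w) = (e w)%:~R + 2.
Proof. by rewrite bil_Ebasr_mx mulmxKV ?unitmx_Imx // mxE. Qed.

Lemma bil_Estar_Ebasr v w : bil (Estar v) (Ebas w) = - (v == w)%:R.
Proof.
rewrite bil_Ebasr_mx /Estar mulNmx -row_mul mulVmx ?unitmx_Imx //.
by rewrite row1 !mxE eq_sym.
Qed.

Lemma inL'_ZK : inL' ZK.
Proof. by apply/inL'P => w; rewrite bil_ZK_Ebasr rpredD ?intr_int. Qed.

Lemma chiD x y : chi (x + y) = chi x + chi y - bil x y.
Proof.
by rewrite /Defs.chi !(bilDl, bilDr, bilBr, bilBl) (bilC y x); lra.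
Qed.

Lemma chi_Ebas v : chi (Ebas v) = 1.
Proof.
by rewrite /Defs.chi bilBr bil_Ebas mxE eqxx bilC bil_ZK_Ebasr; lra.
Qed.

Lemma vle0_of_bil_neg y : (forall v, y 0 v < 0 -> bil y (Ebas v) <= 0) -> vle 0 y.
Proof.
(* [y_] is the negative part of [y]; negative definiteness and [(y_, y_) >= 0]
   force [y_ = 0]. *)
move=> yneg; pose y_ : vec n := \row_v (if y 0 v < 0 then - y 0 v else 0).
have y_E v : y_ 0 v = if y 0 v < 0 then - y 0 v else 0 by rewrite mxE.
have y_ge0 : vle 0 y_.
  by apply/vle0P => v; rewrite y_E; case: ltP => // /ltW; rewrite oppr_ge0.
have ypos_ge0 : vle 0 (y + y_).
  by apply/vle0P => v; rewrite mxE y_E; case: ltP; rewrite ?subrr ?addr0.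
have disj v : (y + y_) 0 v * y_ 0 v = 0.
  by rewrite mxE y_E; case: ltP; rewrite ?subrr ?mul0r ?mulr0.
have bil_y_y_ : bil y y_ <= 0.
  rewrite bil_expandr; apply: sumr_le0 => v _; rewrite y_E.
  case: ltP => [yv|_]; last by rewrite mul0r.
  by apply: mulr_ge0_le0; [rewrite oppr_ge0 ltW | apply: yneg].
have : 0 <= bil y_ y_.
  rewrite {1}(_ : y_ = (y + y_) - y) ?bilBl; last by rewrite addrC addKr.
  by rewrite subr_ge0 (le_trans bil_y_y_) ?bil_ge0_disjoint.
have [y_0 _|/negd y_neg] := eqVneq y_ 0; last by rewrite leNgt y_neg.
apply/vle0P => v; have := congr1 (fun z : vec n => z 0 v) y_0.
rewrite y_E mxE; case: ltP => // yv /eqP; rewrite oppr_eq0 => /eqP y0.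
by rewrite y0 ltxx in yv.
Qed.

(** * Supports of cycles with nonpositive chi *)

Lemma exists_edge_across (P : {set 'I_n}) u v : u \in P -> v \notin P ->
  exists a b, [/\ adj a b, a \in P & b \notin P].
Proof.
have /connectP[p] := conn u v; elim: p u => [|w p IH] u /=; first by move=> _ -> ->.
move=> /andP[uw pw] lastE uP vP.
by case: (boolP (w \in P)) => [wP|wnP]; [apply: (IH w) | exists u, w].
Qed.

Lemma supp_eq0 x : (supp x == set0) = (x == 0).
Proof.
apply/eqP/eqP => [/setP x0|->]; last by apply/setP => v; rewrite !inE mxE eqxx.
apply/matrixP => i v; rewrite [i]ord1 mxE.
by apply/eqP/negPn; move: (x0 v); rewrite !inE => ->.
Qed.

Lemma chi_add_Ebas l b : chi (l + Ebas b) = chi l + 1 - bil l (Ebas b).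
Proof. by rewrite chiD chi_Ebas. Qed.

Lemma chi_le0_grow l a b : inL l -> vle 0 l -> chi l <= 0 -> l 0 b = 0 ->
  a \in supp l -> adj a b -> chi (l + Ebas b) <= 0.
Proof.
move=> lL l0 chil lb al ab; rewrite chi_add_Ebas.
have := bil_Ebasr_ge_neighbour l0 lb ab; have := supp_coord_ge1 lL l0 al; lra.
Qed.

Lemma supp_add_Ebas l b : l 0 b = 0 -> supp (l + Ebas b) = b |: supp l.
Proof.
move=> lb; apply/setP => w; rewrite !inE mxE Ebas_coord.
by have [<-|bw] := eqVneq b w; rewrite ?lb ?add0r ?oner_eq0 ?addr0.
Qed.

Lemma vle0_add_Ebas l b : vle 0 l -> vle 0 (l + Ebas b).
Proof. by move/vle0P=> l0; apply/vle0P => w; rewrite mxE Ebas_coord addr_ge0 ?ler0n. Qed.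

Lemma no_two_supp_neighbours l a1 a2 b : inL l -> vle 0 l -> chi l <= 0 ->
  l 0 b = 0 -> a1 \in supp l -> a2 \in supp l -> a1 != a2 ->
  adj a1 b -> adj a2 b -> False.
Proof.
move=> lL l0 chil lb a1l a2l a12 a1b a2b.
have lbL : inL (l + Ebas b) by apply: inLD => //; apply: inL_Ebas.
have lbpos : vpos (l + Ebas b).
  split; first exact: vle0_add_Ebas.
  by move/eqP; rewrite -supp_eq0 supp_add_Ebas // -cards_eq0 cardsU1 !inE lb eqxx.
have Tb a : a \in [set a1; a2] -> adj a b by case/set2P => ->.
have := bil_Ebasr_ge_sum l0 lb Tb; rewrite big_setU1 ?big_set1 ?inE //=.
have := supp_coord_ge1 lL l0 a1l; have := supp_coord_ge1 lL l0 a2l.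
have := chi_ge0 lbL lbpos; rewrite chi_add_Ebas; lra.
Qed.

Lemma supp_connected l (X : {set 'I_n}) : inL l -> vle 0 l -> chi l <= 0 ->
  X \subset supp l -> X != set0 ->
  (forall a b, a \in X -> b \in supp l -> adj a b -> b \in X) -> supp l \subset X.
Proof.
(* Add to [l] a vertex [b] outside [supp l] adjacent to [X]: chi stays
   nonpositive, and [b] has no neighbour in [supp l :\: X], since otherwise
   chi (l + E_b) < 0.  Induct on the number of vertices outside [supp l]. *)
move: {2}#|~: supp l| (leqnn #|~: supp l|) => k.
elim: k l X => [|k IH] l X hk lL l0 chil Xl /set0Pn[s sX] Xclosed;
  apply/subsetP => t tl; apply/negPn/negP => tX;
  have [a [b [ab aX bX]]] := exists_edge_across sX tX;
  have bl : b \notin supp l by apply: contra bX => bl; apply: Xclosed aX bl ab.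
  by move: hk; rewrite leqn0 cards_eq0 => /eqP/setP/(_ b); rewrite in_setC bl in_set0.
have lb : l 0 b = 0 by apply/eqP; rewrite inE negbK in bl.
have al : a \in supp l := subsetP Xl a aX.
have lbL : inL (l + Ebas b) by apply: inLD => //; apply: inL_Ebas.
suff /subsetP/(_ t) : supp (l + Ebas b) \subset b |: X.
  rewrite supp_add_Ebas // !in_setU1 tl orbT (negbTE tX) orbF => /(_ isT) /eqP tb.
  by rewrite -tb tl in bl.
apply: IH => //.
- have := cardsD1 b (~: supp l); rewrite supp_add_Ebas // setCU setIC -setDE inE bl.
  by move: hk => /[swap] ->.
- exact: vle0_add_Ebas.
- exact: chi_le0_grow lL l0 chil lb al ab.
- by rewrite supp_add_Ebas // setUS.
- by apply/set0Pn; exists b; rewrite !inE eqxx.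
- move=> x y; rewrite supp_add_Ebas // !in_setU1.
  move=> /orP[/eqP->|xX] /orP[/eqP->|yl] xy; rewrite ?eqxx //.
  + apply/orP; right; apply: contraT => yX.
    have ay : a != y by apply: contraNneq yX => <-.
    by case: (no_two_supp_neighbours lL l0 chil lb al yl ay ab); rewrite adj_sym.
  + by rewrite (Xclosed x y xX yl xy) orbT.
Qed.

Lemma SpL_ge0 B y : SpL B y -> vle 0 y.
Proof.
case=> _ yout yB; apply: vle0_of_bil_neg => v yv; apply: yB.
by apply: contraTT yv => /yout ->; rewrite ltxx.
Qed.

Lemma SpL_supp_gt0 A y : inL A -> vle 0 A -> chi A <= 0 ->
  SpL (supp A) y -> y != 0 -> forall v, v \in supp A -> 0 < y 0 v.
Proof.
move=> AL A0 chiA ySp y0 v vA; have y_ge0 := SpL_ge0 ySp.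
case: ySp => _ yout yB.
have yA : supp y \subset supp A.
  by apply/subsetP => w; apply: contraLR => /yout; rewrite inE negbK => ->.
have yclosed a b : a \in supp y -> b \in supp A -> adj a b -> b \in supp y.
  move=> ay bA ab; apply: contraT; rewrite inE negbK => /eqP yb.
  have := bil_Ebasr_ge_neighbour y_ge0 yb ab; have := yB b bA.
  have : 0 < y 0 a by rewrite lt_def (vle0P _).1 // andbT; rewrite inE in ay.
  lra.
have /subsetP/(_ v vA) : supp A \subset supp y.
  by apply: supp_connected => //; rewrite supp_eq0.
by rewrite inE lt_def => ->; apply: (vle0P _).1.
Qed.

Definition vmin x y : vec n := \row_v Num.min (x 0 v) (y 0 v).

Lemma vmin_lel x y : vle (vmin x y) x.
Proof. by move=> v; rewrite mxE ge_min lexx. Qed.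

Lemma vmin_ler x y : vle (vmin x y) y.
Proof. by move=> v; rewrite mxE ge_min lexx orbT. Qed.

Lemma SpL_vmin B x y : SpL B x -> SpL B y -> SpL B (vmin x y).
Proof.
move=> [xL xout xB] [yL yout yB]; split.
- by move=> v; rewrite mxE; case: leP.
- by move=> v vB; rewrite mxE xout // yout // minxx.
- move=> v vB; case: (leP (x 0 v) (y 0 v)) => xy.
  + by apply: le_trans (xB v vB); apply: ler_bil_Ebasr (vmin_lel _ _) _; rewrite mxE min_l.
  + apply: le_trans (yB v vB); apply: ler_bil_Ebasr (vmin_ler _ _) _.
    by rewrite mxE min_r // ltW.
Qed.

Lemma vle_anti x y : vle x y -> vle y x -> x = y.
Proof.
move=> xy yx; apply/matrixP => i v; rewrite [i]ord1.
by apply/eqP; rewrite eq_le xy yx.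
Qed.

Lemma Zmin_le A Z y : inL A -> vle 0 A -> chi A <= 0 ->
  is_Zmin adj e (supp A) Z -> SpL (supp A) y -> y != 0 -> vle Z y.
Proof.
move=> AL A0 chiA [ZSp /eqP Z0 Zmin] ySp y0.
suff <- : vmin y Z = Z by apply: vmin_lel.
apply: Zmin; [exact: SpL_vmin | apply/eqP | exact: vmin_ler].
have /set0Pn[v vZ] : supp Z != set0 by rewrite supp_eq0.
have vA : v \in supp A.
  by apply: contraTT vZ => vA; case: ZSp => _ Zout _; rewrite inE Zout ?eqxx.
apply/eqP => /matrixP/(_ 0 v); rewrite !mxE => /eqP; apply/negP.
by rewrite gt_eqF // lt_min !(SpL_supp_gt0 AL A0 chiA).
Qed.

(** * The NN-elliptic sequence exhausts S'_[Z_K] below Z_K *)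

Lemma ZK_inSp : inSp ZK.
Proof.
split=> [|v]; first exact: inL'_ZK.
by rewrite bil_ZK_Ebasr -lerBrDr sub0r -[2]/(2%:~R) -rmorphN ler_int e_le.
Qed.

Lemma chi_ZK_sub c : chi (ZK - c) = bil c (ZK - c) / 2.
Proof. by rewrite /Defs.chi !(bilBr, bilBl) (bilC c ZK); lra. Qed.

Lemma chi_ZK_sub_le0 c : (forall w, bil c (Ebas w) <= 0) -> vle c ZK ->
  chi (ZK - c) <= 0.
Proof.
move=> c_le0 cZK; rewrite chi_ZK_sub bil_expandr pmulr_lle0 ?invr_gt0 //.
apply: sumr_le0 => w _; apply: mulr_ge0_le0 => //.
by rewrite coordB subr_ge0.
Qed.

Lemma bil_Ebas_eq0_on_supp c : inSp c -> inL (c - ZK) -> vle c ZK -> c != ZK ->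
  forall v, v \in supp (ZK - c) -> bil c (Ebas v) = 0.
Proof.
(* chi (ZK - c) = (c, ZK - c) / 2 is a sum of nonpositive terms and is
   nonnegative by ellipticity, so every term vanishes. *)
move=> [_ c_le0] cL cZK cZK_neq v.
have AL : inL (ZK - c) by rewrite -opprB; apply: inLN.
have A0 : vle 0 (ZK - c) by apply/vle0P => w; rewrite coordB subr_ge0.
have Apos : vpos (ZK - c) by split=> // /eqP; rewrite subr_eq0 eq_sym (negbTE cZK_neq).
have term_ge0 w : 0 <= - ((ZK - c) 0 w * bil c (Ebas w)).
  by rewrite oppr_ge0 mulr_ge0_le0 // coordB subr_ge0.
have sum0 : \sum_w - ((ZK - c) 0 w * bil c (Ebas w)) = 0.
  apply/eqP; rewrite eq_le sumr_ge0 // andbT sumrN oppr_le0.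
  by have := chi_ge0 AL Apos; rewrite chi_ZK_sub bil_expandr pmulr_lge0 ?invr_gt0.
have /eqP := psumr_eq0P (fun w _ => term_ge0 w) sum0 (i := v) isT.
by rewrite oppr_eq0 mulf_eq0 inE => /orP[/eqP->|/eqP].
Qed.

Definition Sp_below u c := [/\ inSp c, inL (c - ZK), vle c u & vle c ZK].

Lemma Sp_below_add_Zmin u c Z : inSp u -> inL (u - ZK) -> vle u ZK ->
  Sp_below u c -> c != u -> is_Zmin adj e (supp (ZK - c)) Z -> Sp_below u (c + Z).
Proof.
(* [u - c] is a nonzero element of S'(B) /\ L(B), B = |ZK - c|, hence
   dominates Z_min(B). *)
move=> uSp uL uZK [cSp cL cu cZK] cu_neq ZB.
have cZK_neq : c != ZK.
  by apply: contra_neq cu_neq => cE; move: cu; rewrite cE => cu; apply: vle_anti.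
set B := supp (ZK - c) in ZB.
have inB v : (v \in B) = (c 0 v != ZK 0 v) by rewrite inE coordB subr_eq0 eq_sym.
have c_orth := bil_Ebas_eq0_on_supp cSp cL cZK cZK_neq.
have AL : inL (ZK - c) by rewrite -opprB; apply: inLN.
have A0 : vle 0 (ZK - c) by apply/vle0P => v; rewrite coordB subr_ge0.
have DSp : SpL B (u - c).
  split.
  - have -> : u - c = (u - ZK) - (c - ZK) by rewrite opprB addrA subrK.
    exact: inLB.
  - move=> v; rewrite inB negbK => /eqP cv; apply/eqP.
    by rewrite coordB subr_eq0 eq_le cu cv uZK.
  - by move=> v vB; rewrite bilBl c_orth // subr0; case: uSp => _ ->.
have [[ZL Zout Z_le0] _ _] := ZB.
have D0 : u - c != 0 by rewrite subr_eq0 eq_sym.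
have Zle := Zmin_le AL A0 (chi_ZK_sub_le0 cSp.2 cZK) ZB DSp D0.
have cZu : vle (c + Z) u by move=> v; have := Zle v; rewrite coordB coordD; lra.
have cZZK : vle (c + Z) ZK by move=> v; apply: le_trans (cZu v) (uZK v).
split => //.
- split; first by apply: inL'D; [case: cSp | exact: inL_L'].
  move=> v; case: (boolP (v \in B)) => vB; first by rewrite bilDl c_orth // add0r Z_le0.
  apply: le_trans (ZK_inSp.2 v); apply: ler_bil_Ebasr => //.
  by rewrite mxE Zout // addr0; move: vB; rewrite inB negbK => /eqP.
- by rewrite addrAC; apply: inLD.
Qed.

Lemma Cs_succ (Zs : nat -> vec n) k : Cs Zs k.+1 = Cs Zs k + Zs k.+1.
Proof. by rewrite /Cs big_ord_recr. Qed.

Lemma NN_seq_cover m Bs Zs u : NN_seq adj e m Bs Zs ->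
  inSp u -> inL (u - ZK) -> vle u ZK -> u != ZK -> exists2 k, (k <= m)%N & u = Cs Zs k.
Proof.
move=> [_ [s_Sp s_L s_min] Zmin NN_supp Cm] uSp uL uZK uZK_neq.
have below k : (k <= m.+1)%N ->
    (exists2 i, (i < k)%N & u = Cs Zs i) \/ Sp_below u (Cs Zs k).
  elim: k => [_|k IH km].
    right; rewrite /Cs big_ord1; split; [by [] | by [] | exact: s_min |].
    by apply: s_min ZK_inSp _; rewrite subrr => v; rewrite mxE.
  have [[i ik ->]|ck] := IH (ltnW km); first by left; exists i => //; apply: ltnW.
  have [<-|cu] := eqVneq (Cs Zs k) u; first by left; exists k.
  right; rewrite Cs_succ; apply: Sp_below_add_Zmin => //.
  by have [_ <-] := NN_supp k km; apply: Zmin.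
have [[i im ->]|[_ _ uC _]] := below m.+1 (leqnn _); first by exists i.
by rewrite Cm in uC; rewrite (vle_anti uZK uC) eqxx in uZK_neq.
Qed.

(** * Associated cycles of exponents of P_0 *)

Lemma sum_Ebas_coord (A : {set 'I_n}) (k : 'I_n -> rat) w :
  (\sum_(v in A) k v *: Ebas v) 0 w = if w \in A then k w else 0.
Proof.
rewrite summxE; under eq_bigr => v _ do rewrite [_ 0 w]mxE Ebas_coord.
case: ifP => wA; last first.
  by rewrite big1 // => v vA; case: eqP => [vw|]; [rewrite vw wA in vA | rewrite mulr0].
rewrite (bigD1 w) //= eqxx mulr1 big1 ?addr0 // => v /andP[_ /negbTE ->].
by rewrite mulr0.
Qed.

Lemma zcoef_bil_le0 x w : zcoef adj e x != 0 -> bil x (Ebas w) <= 0.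
Proof.
(* A nonzero coefficient has a term: x = \sum_v k_v E_v^* with k_v >= 0. *)
rewrite /zcoef; case: (pickP (fun k : {ffun 'I_n -> 'I_(zbound adj e x)} =>
  \sum_v ((k v : nat)%:R *: Estar v) == x)) => [k /eqP <- _|none]; last first.
  by rewrite big_pred0 ?eqxx.
rewrite bil_suml (bigD1 w) //= big1 => [|v /negbTE vw]; last first.
  by rewrite bilZl bil_Estar_Ebasr vw oppr0 mulr0.
by rewrite bilZl bil_Estar_Ebasr eqxx addr0 mulrN1 oppr_le0.
Qed.

Section AssociatedCycle.
Variables ell l' : vec n.
Hypotheses (ellP : inSuppP0 adj e ell) (l'P : assoc_cycle adj e ell l').

Lemma assoc_cycle_coord : exists mv : 'I_n -> nat, forall w,
  l' 0 w = ZK 0 w - 1 - ell 0 w - (if w \in negset ell then (mv w)%:R else 0).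
Proof.
case: l'P => _ _ _ [mv ellE]; exists mv => w.
have := congr1 (fun y : vec n => y 0 w) ellE.
rewrite /= !coordB sum_Ebas_coord [Eall n 0 w]mxE; set s := (if _ then _ else _); lra.
Qed.

Lemma assoc_cycle_le w : l' 0 w <= ZK 0 w - 1 - ell 0 w.
Proof.
have [mv ->] := assoc_cycle_coord.
by rewrite lerBlDr lerDl; case: ifP.
Qed.

Lemma assoc_cycle_out w : w \notin negset ell -> l' 0 w = ZK 0 w - 1 - ell 0 w.
Proof. by have [mv ->] := assoc_cycle_coord => /negbTE ->; rewrite subr0. Qed.

Lemma assoc_cycle_int : inL (l' - ZK).
Proof.
have [mv l'E] := assoc_cycle_coord; case: ellP => ellL _ _.
move=> w; rewrite coordB l'E; set s := (if _ then _ else _).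
have sL : s \is a Num.int by rewrite /s; case: ifP.
have -> : ZK 0 w - 1 - ell 0 w - s - ZK 0 w = - (1 + ell 0 w + s) by lra.
by rewrite rpredN !rpredD.
Qed.

Lemma assoc_cycle_inSp : inSp l'.
Proof.
case: (l'P) => l'L' l'ZK l'neg _; split => // w.
case: (boolP (w \in negset ell)) => wn.
  by apply: le_trans (ZK_inSp.2 w); apply: ler_bil_Ebasr l'ZK (l'neg w wn).
case: ellP => _ _ /zcoef_bil_le0 x_le0; apply: le_trans (x_le0 w).
apply: ler_bil_Ebasr => [v|]; rewrite !coordB [Eall n 0 _]mxE.
  exact: assoc_cycle_le.
exact: assoc_cycle_out.
Qed.

Lemma supp_ZK_sub_assoc_cycle : supp (ZK - l') = ~: negset ell.
Proof.
case: (l'P) => _ _ l'neg _; apply/setP => w.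
rewrite in_setC !inE coordB subr_eq0.
case: ltP => wn; first by rewrite l'neg ?inE // eqxx.
rewrite assoc_cycle_out ?inE -?leNgt //; apply/negP => /eqP; lra.
Qed.

Lemma assoc_cycle_neq_ZK : l' != ZK.
Proof.
case: ellP => _ nprec _.
have [w wn] : exists w, w \notin negset ell.
  case: (pickP (fun w => w \notin negset ell)) => [w wn|none]; first by exists w.
  by exfalso; apply: nprec => v; rewrite mxE; move/negbFE: (none v); rewrite inE.
apply/eqP => l'E; move/setP/(_ w): supp_ZK_sub_assoc_cycle.
by rewrite in_setC wn l'E subrr inE mxE eqxx.
Qed.

End AssociatedCycle.
End EllipticCycles.

Theorem mainTheorem1 (n : nat) (adj : rel 'I_n) (e : 'I_n -> int)
    (m : nat) (Bs : nat -> {set 'I_n}) (Zs : nat -> 'rV[rat]_n) :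
  is_tree adj -> neg_def adj e -> elliptic adj e ->
  NN_seq adj e m Bs Zs ->
  forall ell l' : 'rV[rat]_n,
    inSuppP0 adj e ell -> assoc_cycle adj e ell l' ->
    (exists2 k, (k <= m)%N & l' = Cs Zs k) /\
    (forall k, (k <= m)%N -> l' = Cs Zs k -> negset ell = ~: Bs k.+1).
Proof.
move=> [adj_sym _ conn _] negd [e_le _ chi_ge0] NN ell l' ellP lP.
split.
  apply: (NN_seq_cover adj_sym negd e_le conn chi_ge0 NN).
  - exact: (assoc_cycle_inSp negd e_le ellP lP).
  - exact: (assoc_cycle_int ellP lP).
  - by case: lP.
  - exact: (assoc_cycle_neq_ZK ellP lP).
move=> k km lE; case: NN => _ _ _ /(_ k km)[_ ->] _.
by rewrite -lE (supp_ZK_sub_assoc_cycle lP) setCK.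
Qed.
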